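(* For each $n$ let $0<p_n,q_n\le 1$ with $\frac{p_nq_n^2n}{\log n}\to\infty$ as $n\to\infty$, and let $\alpha^{(0)}$ be an initial configuration of $n$ cards. Let $\alpha^{(k)}$ be the configuration after $k$ moves of $\mathscr{B}(n,p_n,q_n)$, and let $N(\alpha^{(k)})$ denote its number of nonempty piles. Put $D=\lceil 14\log n/(p_nq_n)\rceil$ and $M=\lceil n^2/p_n\rceil$. Then \[ \frac{1}{q_nn}\max\{N(\alpha^{(D+1)}),\dotsc,N(\alpha^{(D+M)})\}\to 0\quad\text{in probability as } n\to\infty. \]
   Context: $\mathscr{B}(n,p,q)$ ($0<p,q\le 1$) is $p$-random $q$-proportion Bulgarian solitaire on $n$ identical cards distributed in piles. In one move, from each pile of size $h$ the top $\lceil qh\rceil$ cards are candidates; each candidate card is picked with probability $p$, independently of all other candidates; the picked cards are removed and together form one new pile. *)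

From HB Require Import structures.
From mathcomp Require Import all_boot all_order all_algebra.
From mathcomp Require Import all_classical all_reals all_analysis.
Set Implicit Arguments. Unset Strict Implicit. Unset Printing Implicit Defensive.
Import Order.TTheory GRing.Theory Num.Theory.
Local Open Scope ring_scope.

(* p-random q-proportion Bulgarian solitaire B(n,p,q).
   A configuration is a list of pile sizes (order irrelevant; cards identical). *)
Section Bulgarian.
Variable R : realType.

Definition cand (q : R) (h : nat) : nat := `|Num.ceil (q * h%:R)|%N.

(* all vectors xs with xs_i <= cs_i (number of picked cards from each pile) *)
Fixpoint outcomes (cs : seq nat) : seq (seq nat) :=
  match cs with
  | [::] => [:: [::]]
  | c :: cs' => [seq x :: xs | x <- iota 0 c.+1, xs <- outcomes cs']
  end.

Definition binw (p : R) (c x : nat) : R := 'C(c, x)%:R * p ^+ x * (1 - p) ^+ (c - x)%N.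

Definition weight (p : R) (cs xs : seq nat) : R :=
  \prod_(cx <- zip cs xs) binw p cx.1 cx.2.

Definition next_conf (s xs : seq nat) : seq nat :=
  [seq h <- [seq (a.1 - a.2)%N | a <- zip s xs] | (0 < h)%N]
  ++ (if (0 < sumn xs)%N then [:: sumn xs] else [::]).

Definition step (p q : R) (s : seq nat) : seq (R * seq nat) :=
  [seq (weight p (map (cand q) s) xs, next_conf s xs) | xs <- outcomes (map (cand q) s)].

(* traj_prob p q k s E = probability that the trajectory [:: alpha^(1); ...; alpha^(k)]
   of k moves started at alpha^(0) = s satisfies E *)
Fixpoint traj_prob (p q : R) (k : nat) (s : seq nat) (E : seq (seq nat) -> bool) : R :=
  match k with
  | 0 => (E [::])%:R
  | k'.+1 => \sum_(ws <- step p q s)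
               ws.1 * traj_prob p q k' ws.2 (fun tr => E (ws.2 :: tr))
  end.

End Bulgarian.

Definition npiles (s : seq nat) : nat := count (fun h => 0 < h)%N s.

Definition is_config (n : nat) (s : seq nat) : Prop :=
  sumn s = n /\ all (fun h => 0 < h)%N s.

From HB Require Import structures.
From mathcomp Require Import all_boot all_order all_algebra.
From mathcomp Require Import all_classical all_reals all_analysis.
From mathcomp Require Import zify ring lra.
Import Order.TTheory GRing.Theory Num.Theory.
Import numFieldNormedType.Exports.
Local Open Scope classical_set_scope.
Local Open Scope ring_scope.

(* Track the cards of the initial configuration.  A pile of size h has
   ceil(q h) >= q h candidates, each picked with probability p, so in
   expectation every pile loses at least a fraction p q of its cards per move
   and after t moves at most (1 - p q)^t n initial cards remain.  Every move
   creates at most one pile, so a configuration reached after t moves has more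
   than t nonempty piles only if some initial card survives; by Markov's
   inequality this has probability at most (1 - p q)^t n.  With t = D this is
   at most n^-13, and a union bound over the M moves of the window gives a
   failure probability at most M n^-13 <= 1/n, using 1/p <= n.  Finally
   D ~ 14 log n / (p q) is o(q n) because p q^2 n / log n -> oo. *)

Section Solitaire.
Variable R : realType.
Variables p q : R.
Hypothesis p01 : 0 <= p <= 1.
Hypothesis q01 : 0 <= q <= 1.

Lemma candE h : (cand q h)%:Z = Num.ceil (q * h%:R).
Proof.
have qh_ge0 : 0 <= q * h%:R by case/andP: q01 => q0 _; rewrite mulr_ge0.
by rewrite /cand gez0_abs // ceil_ge0 (lt_le_trans _ qh_ge0).
Qed.

Lemma cand_le h : (cand q h <= h)%N.
Proof.
case/andP: q01 => _ q1.
by rewrite -lez_nat candE ceil_le_int -[X in _ <= X]mul1r ler_wpM2r.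
Qed.

Lemma cand_ge h : q * h%:R <= (cand q h)%:R.
Proof. by have := ceil_ge (q * h%:R); rewrite -candE. Qed.

Lemma binw_ge0 c x : 0 <= binw p c x.
Proof. by case/andP: p01 => p0 p1; rewrite /binw !mulr_ge0 ?exprn_ge0 ?subr_ge0. Qed.

Lemma sum_binw c : \sum_(x <- iota 0 c.+1) binw p c x = 1.
Proof.
have -> : iota 0 c.+1 = index_iota 0 c.+1 by rewrite /index_iota subn0.
rewrite -(expr1n _ c) -[1 in RHS](subrK p) exprDn big_mkord.
by apply: eq_bigr => x _; rewrite /binw -mulr_natl; ring.
Qed.

Lemma mean_binw c : \sum_(x <- iota 0 c.+1) binw p c x * x%:R = p * c%:R.
Proof.
case: c => [|c]; first by rewrite big_seq1 !mulr0.
have term x : binw p c.+1 x.+1 * x.+1%:R = p * c.+1%:R * binw p c x.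
  have bin_diag : (c.+1 * 'C(c, x))%:R = (x.+1 * 'C(c.+1, x.+1))%:R :> R.
    by rewrite mul_bin_diag.
  rewrite !natrM in bin_diag; rewrite /binw subSS exprS.
  transitivity (p * p ^+ x * (1 - p) ^+ (c - x) * (x.+1%:R * 'C(c.+1, x.+1)%:R)).
    by ring.
  by rewrite -bin_diag; ring.
have -> : iota 0 c.+2 = 0%N :: map (addn 1) (iota 0 c.+1) by rewrite -iotaDl.
rewrite big_cons mulr0 add0r big_map.
under eq_bigr => x _ do rewrite add1n term.
by rewrite -big_distrr sum_binw /= mulr1.
Qed.

Lemma weight_ge0 cs xs : 0 <= weight p cs xs.
Proof. by apply: prodr_ge0 => cx _; apply: binw_ge0. Qed.

Lemma weight_cons c cs x xs :
  weight p (c :: cs) (x :: xs) = binw p c x * weight p cs xs.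
Proof. by rewrite /weight big_cons. Qed.

Lemma sum_weight cs : \sum_(xs <- outcomes cs) weight p cs xs = 1.
Proof.
elim: cs => [|c cs IH]; first by rewrite big_seq1 /weight big_nil.
rewrite big_allpairs_dep -(sum_binw c); apply: eq_bigr => x _.
by under eq_bigr => xs _ do rewrite weight_cons; rewrite -big_distrr IH /= mulr1.
Qed.

Lemma outcomes_le s xs : xs \in outcomes (map (cand q) s) -> all2 leq xs s.
Proof.
elim: s xs => [|h s IH] xs; first by rewrite inE => /eqP ->.
case/allpairsPdep => x [ys [x_le ys_in ->]] /=.
rewrite mem_iota add0n ltnS in x_le.
by rewrite IH // (leq_trans x_le (cand_le h)).
Qed.

Definition leftover (s xs : seq nat) : seq nat := [seq (a.1 - a.2)%N | a <- zip s xs].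

Lemma size_leftover s xs : all2 leq xs s -> size (leftover s xs) = size s.
Proof. by rewrite all2E => /andP[/eqP eq_size _]; rewrite size_map size_zip eq_size minnn. Qed.

Lemma sumn_leftover s xs : all2 leq xs s -> (sumn (leftover s xs) + sumn xs)%N = sumn s.
Proof. by elim: s xs => [|h s IH] [|x xs] //= /andP[x_le /IH]; rewrite /leftover; lia. Qed.

Lemma sumn_filter_gt0 (u : seq nat) : sumn [seq h <- u | (0 < h)%N] = sumn u.
Proof. by elim: u => [|[|h] u IH] //=; rewrite IH. Qed.

Lemma sumn_next_conf s xs : all2 leq xs s -> sumn (next_conf s xs) = sumn s.
Proof.
move=> xs_le; rewrite /next_conf sumn_cat sumn_filter_gt0 -(sumn_leftover _ _ xs_le).
by case: ifP => /=; rewrite /leftover; lia.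
Qed.

Fixpoint expect (k : nat) (s : seq nat) (f : seq nat -> R) : R :=
  if k is k'.+1 then \sum_(ws <- step p q s) ws.1 * expect k' ws.2 f else f s.

Lemma expectS k s f : expect k.+1 s f =
  \sum_(xs <- outcomes (map (cand q) s))
     weight p (map (cand q) s) xs * expect k (next_conf s xs) f.
Proof. by rewrite /= big_map. Qed.

Lemma expectD a b s f : expect (a + b) s f = expect a s (fun s' => expect b s' f).
Proof. by elim: a s => [|a IH] s //; rewrite addSn !expectS; under eq_bigr do rewrite IH. Qed.

Lemma expect_le_conserved k s f B :
  (forall s', sumn s' = sumn s -> f s' <= B) -> expect k s f <= B.
Proof.
elim: k s => [|k IH] s f_le; first exact: f_le.
rewrite expectS -[B]mul1r -(sum_weight (map (cand q) s)) big_distrl /=.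
rewrite !big_seq; apply: ler_sum => xs xs_in.
apply: ler_wpM2l; first exact: weight_ge0.
by apply: IH => s' eq_s'; rewrite f_le // eq_s' sumn_next_conf // outcomes_le.
Qed.

Lemma step_weight_ge0 s ws : ws \in step p q s -> 0 <= ws.1.
Proof. by case/mapP => xs _ ->; apply: weight_ge0. Qed.

Lemma sum_step_weight s : \sum_(ws <- step p q s) ws.1 = 1.
Proof. by rewrite big_map sum_weight. Qed.

Lemma traj_prob_const k s (b : bool) : traj_prob p q k s (fun _ => b) = b%:R.
Proof.
elim: k s => [|k IH] s //=.
by under eq_bigr do rewrite IH; rewrite -big_distrl sum_step_weight /= mul1r.
Qed.

Lemma le_traj_prob k s (E1 E2 : pred (seq (seq nat))) :
  (forall tr, E1 tr -> E2 tr) -> traj_prob p q k s E1 <= traj_prob p q k s E2.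
Proof.
elim: k s E1 E2 => [|k IH] s E1 E2 E12 /=.
  by case: (boolP (E1 [::])) => [/E12 -> //|_]; rewrite ler0n.
rewrite !big_seq; apply: ler_sum => ws ws_in.
by apply: ler_wpM2l; [exact: step_weight_ge0 ws_in | apply: IH => tr /E12].
Qed.

Lemma traj_prob_ge0 k s E : 0 <= traj_prob p q k s E.
Proof. by have := @le_traj_prob k s (fun _ => false) E; rewrite traj_prob_const; apply. Qed.

Lemma traj_prob_or_le k s (E1 E2 : pred (seq (seq nat))) :
  traj_prob p q k s (fun tr => E1 tr || E2 tr)
  <= traj_prob p q k s E1 + traj_prob p q k s E2.
Proof.
elim: k s E1 E2 => [|k IH] s E1 E2 /=.
  by case: (E1 [::]); case: (E2 [::]); rewrite ?addr0 ?add0r ?lerDl ?ler0n.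
rewrite -big_split !big_seq; apply: ler_sum => ws ws_in.
by rewrite /= -mulrDr; apply: ler_wpM2l; [exact: step_weight_ge0 ws_in | apply: IH].
Qed.

Lemma traj_prob_has_le k s (E : nat -> pred (seq (seq nat))) js :
  traj_prob p q k s (fun tr => has (fun j => E j tr) js)
  <= \sum_(j <- js) traj_prob p q k s (E j).
Proof.
elim: js => [|j js IH].
  rewrite big_nil -[X in X <= _]/(traj_prob p q k s (fun=> false)).
  by rewrite (traj_prob_const k s false).
by rewrite big_cons (le_trans (traj_prob_or_le _ _ (E j) _)) // lerD2l.
Qed.

Lemma traj_prob_nth k j s (P : pred (seq nat)) : (0 < j <= k)%N ->
  traj_prob p q k s (fun tr => P (nth [::] tr j.-1)) = expect j s (fun s' => (P s')%:R).
Proof.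
elim: k j s => [|k IH] [|j] s //= j_le; apply: eq_bigr => ws _; congr (_ * _).
by case: j j_le => [|j] j_le; [rewrite (traj_prob_const _ _ (P ws.2)) | exact: (IH j.+1)].
Qed.

Lemma mean_leftover_pile h :
  \sum_(x <- iota 0 (cand q h).+1) binw p (cand q h) x * (h%:R - x%:R)
  <= (1 - p * q) * h%:R.
Proof.
case/andP: p01 => p0 _; under eq_bigr do rewrite mulrBr.
rewrite sumrB -big_distrl sum_binw mean_binw /= mul1r mulrBl mul1r lerD2l lerN2 -mulrA.
by apply: ler_wpM2l => //; apply: cand_ge.
Qed.

Lemma expected_old_mass_step s m :
  \sum_(xs <- outcomes (map (cand q) s))
     weight p (map (cand q) s) xs * (sumn (take m (leftover s xs)))%:R
  <= (1 - p * q) * (sumn (take m s))%:R.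
Proof.
elim: s m => [|h s IH] [|m]; rewrite ?take0 ?mulr0; try by rewrite big_seq1 mulr0.
  by rewrite big1 // => xs _; rewrite take0 mulr0.
rewrite [in X in _ <= X]/=; set c := cand q h; set old : R := (sumn (take m s))%:R.
apply: (@le_trans _ _ (\sum_(x <- iota 0 c.+1)
   (binw p c x * (h%:R - x%:R) + binw p c x * ((1 - p * q) * old)))).
  rewrite [map _ _]/= big_allpairs_dep !big_seq; apply: ler_sum => x x_in.
  have x_le : (x <= h)%N.
    by rewrite mem_iota ltnS in x_in; apply: leq_trans x_in (cand_le h).
  rewrite (eq_bigr (fun xs => binw p c x * (weight p (map (cand q) s) xs * (h%:R - x%:R))
      + binw p c x * (weight p (map (cand q) s) xs * (sumn (take m (leftover s xs)))%:R))).
    rewrite big_split /= -!big_distrr -big_distrl /= sum_weight mul1r lerD2l.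
    by apply: ler_wpM2l; [apply: binw_ge0 | apply: IH].
  by move=> xs _; rewrite weight_cons [leftover _ _]/= natrD natrB //; ring.
rewrite big_split /= -big_distrl sum_binw /= mul1r natrD mulrDr lerD2r.
exact: mean_leftover_pile.
Qed.

Lemma next_conf_old_piles s xs m : all2 leq xs s ->
  exists2 m', sumn (take m' (next_conf s xs)) = sumn (take m (leftover s xs))
            & (size (next_conf s xs) <= (m' + (size s - m)).+1)%N.
Proof.
move=> xs_le; set u := leftover s xs.
have split_u : [seq h <- u | (0 < h)%N] =
    [seq h <- take m u | (0 < h)%N] ++ [seq h <- drop m u | (0 < h)%N].
  by rewrite -filter_cat cat_take_drop.
exists (count (fun h => 0 < h)%N (take m u)).
  by rewrite /next_conf -/u split_u -catA take_size_cat ?size_filter // sumn_filter_gt0.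
rewrite /next_conf -/u size_cat split_u size_cat !size_filter.
have := count_size (fun h => 0 < h)%N (drop m u); rewrite size_drop size_leftover //.
by case: ifP => _ /=; lia.
Qed.

Lemma sumn_gt0_npiles (u : seq nat) : (0 < npiles u)%N -> (0 < sumn u)%N.
Proof. by elim: u => [|[|h] u IH] //= /IH. Qed.

Lemma npiles_le_take s m : (npiles s <= npiles (take m s) + (size s - m))%N.
Proof. by rewrite /npiles -{1}(cat_take_drop m s) count_cat leq_add2l -size_drop count_size. Qed.

(* Stated for the cards of the first m piles so that the induction goes
   through: the nonempty leftovers of these piles become the first piles of
   the next configuration (next_conf_old_piles). *)
Lemma prob_npiles_gt t s m j : (t + (size s - m) <= j)%N ->
  expect t s (fun s' => (j < npiles s')%N%:R) <= (1 - p * q) ^+ t * (sumn (take m s))%:R.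
Proof.
elim: t s m j => [|t IH] s m j j_ge.
  rewrite /= expr0 mul1r; case: ltnP => j_lt; rewrite ?ler0n // ler1n sumn_gt0_npiles //.
  by have := npiles_le_take s m; lia.
rewrite expectS; apply: (@le_trans _ _ (\sum_(xs <- outcomes (map (cand q) s))
    weight p (map (cand q) s) xs * ((1 - p * q) ^+ t * (sumn (take m (leftover s xs)))%:R))).
  rewrite !big_seq; apply: ler_sum => xs xs_in.
  apply: ler_wpM2l; first exact: weight_ge0.
  have [m' <- size_next] := next_conf_old_piles _ _ m (outcomes_le _ _ xs_in).
  by apply: IH; lia.
under eq_bigr do rewrite mulrCA.
rewrite -big_distrr exprSr -mulrA /=; apply: ler_wpM2l; last exact: expected_old_mass_step.
case/andP: p01 => p0 p1; case/andP: q01 => q0 q1.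
by rewrite exprn_ge0 // subr_ge0 mulr_ile1.
Qed.

Lemma prob_max_npiles_gt_le D M s :
  traj_prob p q (D + M) s
    (fun tr => (D < \max_(k <- iota D.+1 M) npiles (nth [::] tr k.-1))%N)
  <= M%:R * ((1 - p * q) ^+ D * (sumn s)%:R).
Proof.
pose E k tr := (D < npiles (nth [::] tr k.-1))%N.
apply: (le_trans (@le_traj_prob _ _ _ (fun tr => has (E^~ tr) (iota D.+1 M)) _)).
  move=> tr; apply: contraLR => /hasPn npiles_le; rewrite -leqNgt.
  by apply/bigmax_leqP_seq => k /npiles_le; rewrite -leqNgt.
apply: (le_trans (traj_prob_has_le _ _ E _)).
apply: (@le_trans _ _ (\sum_(k <- iota D.+1 M) (1 - p * q) ^+ D * (sumn s)%:R)).
  rewrite !big_seq; apply: ler_sum => k; rewrite mem_iota => /andP[k_gt k_lt].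
  rewrite /E (traj_prob_nth _ _ _ (fun s' => D < npiles s')%N); last by apply/andP; split; lia.
  rewrite -(subnK (ltnW k_gt)) expectD; apply: expect_le_conserved => s' <-.
  by have := prob_npiles_gt D s' (size s') D; rewrite subnn addn0 take_size; apply.
have -> : iota D.+1 M = index_iota D.+1 (D.+1 + M) by rewrite /index_iota addKn.
by rewrite sumr_const_nat addKn mulr_natl.
Qed.

End Solitaire.

Section Estimates.
Variable R : realType.

Lemma natr_absz_ceil (x : R) : 0 <= x -> x <= `|Num.ceil x|%:R < x + 1.
Proof.
move=> x_ge0; have ceilx_ge0 : 0 <= Num.ceil x by rewrite ceil_ge0 (lt_le_trans _ x_ge0).
rewrite natr_absz ger0_norm // ceil_ge /=.
by have := ceilB1_lt x; rewrite intrD /=; lra.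
Qed.

Lemma expn_1subr_mulXn_le1 (a N : R) (k D : nat) : 0 <= a <= 1 -> 0 < N ->
  k%:R * ln N <= D%:R * a -> (1 - a) ^+ D * N ^+ k <= 1.
Proof.
move=> /andP[a_ge0 a_le1] N_gt0 kD.
have Nk_gt0 : 0 < N ^+ k by apply: exprn_gt0.
rewrite -ler_pdivlMr // div1r.
have -> : (N ^+ k)^-1 = expR (- (k%:R * ln N)) by rewrite expRN expRM_natl lnK.
apply: le_trans (_ : expR (- a) ^+ D <= _).
  by apply: lerXn2r; rewrite ?nnegrE ?expR_ge0 ?subr_ge0 //; have := expR_ge1Dx (- a); lra.
by rewrite -expRM_natr ler_expR; lra.
Qed.

Lemma tail_bound_le_invr (P Q N : R) (D M : nat) : 0 < P <= 1 -> 0 <= Q <= 1 ->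
  2 <= N -> 1 <= P * N -> M%:R * P < N ^+ 2 + P -> (1 - P * Q) ^+ D * N ^+ 6 <= 1 ->
  M%:R * ((1 - P * Q) ^+ D * N) <= N^-1.
Proof.
move=> /andP[P_gt0 P_le1] /andP[Q_ge0 Q_le1] N_ge2 PN_ge1 MP_lt yN6_le1.
have N_gt0 : 0 < N by lra.
have M_ge0 : 0 <= M%:R :> R by [].
have M_le : M%:R <= 2 * N ^+ 3.
  have : M%:R * P * N <= (N ^+ 2 + P) * N by rewrite ler_pM2r // ltW.
  have : N <= N ^+ 3 by rewrite -[X in X <= _]expr1 ler_eXn2l //; lra.
  rewrite !exprS expr0; nra.
set y := (1 - P * Q) ^+ D.
have y_ge0 : 0 <= y by rewrite exprn_ge0 // subr_ge0 mulr_ile1 // ltW.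
rewrite -(ler_pM2r N_gt0) mulVf ?gt_eqF //.
have : M%:R * y <= 2 * N ^+ 3 * y by rewrite ler_wpM2r.
move: yN6_le1; rewrite -/y !exprS expr0; nra.
Qed.

Lemma prob_scaled_max_npiles_le_invn (P Q eps : R) n s :
  0 < P <= 1 -> 0 < Q <= 1 -> 0 < eps -> sumn s = n -> expR (1 : R) <= n%:R ->
  1 <= P * Q ^+ 2 * n%:R / ln (n%:R : R) -> 15 / eps <= P * Q ^+ 2 * n%:R / ln (n%:R : R) ->
  (let D := `|Num.ceil (14 * ln (n%:R : R) / (P * Q))|%N in
   let M := `|Num.ceil ((n%:R : R) ^+ 2 / P)|%N in
   traj_prob P Q (D + M) s
     (fun tr => eps < (\max_(k <- iota D.+1 M) npiles (nth [::] tr k.-1))%:R / (Q * n%:R)))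
  <= n%:R^-1.
Proof.
move=> /andP[P_gt0 P_le1] /andP[Q_gt0 Q_le1] eps_gt0 sum_s e_le_n f_ge1 f_ge; cbv zeta.
set N : R := n%:R in e_le_n f_ge1 f_ge *; set L := ln N in f_ge1 f_ge *.
have N_ge2 : 2 <= N by have := expR_ge1Dx (1 : R); lra.
have N_gt0 : 0 < N by lra.
have L_ge1 : 1 <= L by rewrite -(@expRK R 1) ler_ln ?posrE ?expR_gt0 //; lra.
have L_gt0 : 0 < L by lra.
rewrite ler_pdivlMr // mul1r in f_ge1; rewrite ler_pdivlMr // in f_ge.
have PQ_gt0 : 0 < P * Q by rewrite mulr_gt0.
have PQ_le1 : P * Q <= 1 by rewrite mulr_ile1 // ltW.
set D := `|Num.ceil (14 * L / (P * Q))|%N; set M := `|Num.ceil (N ^+ 2 / P)|%N.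
have /andP[D_ge D_lt] : 14 * L / (P * Q) <= D%:R < 14 * L / (P * Q) + 1.
  by apply: natr_absz_ceil; rewrite divr_ge0 ?ltW //; lra.
have /andP[_ M_lt] : N ^+ 2 / P <= M%:R < N ^+ 2 / P + 1.
  by apply: natr_absz_ceil; rewrite divr_ge0 ?exprn_ge0 ?ltW //; lra.
rewrite -(ler_pM2r PQ_gt0) divfK ?gt_eqF // in D_ge.
rewrite -(ltr_pM2r PQ_gt0) mulrDl mul1r divfK ?gt_eqF // in D_lt.
rewrite -(ltr_pM2r P_gt0) mulrDl mul1r divfK ?gt_eqF // in M_lt.
have D_le : D%:R <= eps * (Q * N).
  rewrite -(ler_pM2r PQ_gt0).
  have : 15 / eps * L * eps = 15 * L by rewrite mulrAC divfK ?gt_eqF.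
  have : 15 / eps * L * eps <= P * Q ^+ 2 * N * eps by rewrite ler_pM2r.
  rewrite expr2; nra.
have P01 : 0 <= P <= 1 by rewrite ltW.
have Q01 : 0 <= Q <= 1 by rewrite ltW.
apply: (le_trans (@le_traj_prob _ P Q P01 _ _ _ (fun tr =>
   (D < \max_(k <- iota D.+1 M) npiles (nth [::] tr k.-1))%N) _)).
  move=> tr; rewrite ltr_pdivlMr ?mulr_gt0 // => lt_max; rewrite -(ltr_nat R); lra.
apply: (le_trans (prob_max_npiles_gt_le _ _ _ P01 Q01 _ _ _)); rewrite sum_s -/N.
apply: tail_bound_le_invr; rewrite -/N ?P_gt0 //.
  have : P * Q ^+ 2 * N <= P * N.
    by rewrite mulrAC ler_piMr ?mulr_ge0 ?exprn_ile1 // ltW.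
  lra.
by apply: expn_1subr_mulXn_le1 => //; rewrite -/L; lra.
Qed.

End Estimates.

Theorem lemma5 (R : realType) (p q : nat -> R) (alpha0 : nat -> seq nat) :
  (forall n, 0 < p n <= 1) ->
  (forall n, 0 < q n <= 1) ->
  ((fun n => p n * q n ^+ 2 * n%:R / ln (n%:R : R)) @ \oo --> +oo) ->
  (forall n, is_config n (alpha0 n)) ->
  forall eps : R, 0 < eps ->
  (fun n =>
     let D := `|Num.ceil (14 * ln (n%:R : R) / (p n * q n))|%N in
     let M := `|Num.ceil ((n%:R : R) ^+ 2 / p n)|%N in
     traj_prob (p n) (q n) (D + M) (alpha0 n)
       (fun tr => eps < (\max_(k <- iota D.+1 M) npiles (nth [::] tr k.-1))%:R
                        / (q n * n%:R)))
    @ \oo --> 0.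
Proof.
move=> p01 q01 f_cvgy alpha0_conf eps eps_gt0.
have invn_cvg0 : (fun n => (n%:R : R)^-1) @ \oo --> 0.
  by apply/gtr0_cvgV0; [near=> n; rewrite ltr0n; near: n; apply: nbhs_infty_gt | apply: cvgr_idn].
apply: (squeeze_cvgr _ (cvg_cst 0) invn_cvg0).
near=> n; apply/andP; split; first by apply: traj_prob_ge0; case/andP: (p01 n) => /ltW -> ->.
apply: prob_scaled_max_npiles_le_invn => //; first by case: (alpha0_conf n).
- by near: n; apply: (cvgry_ge cvgr_idn).
- by near: n; apply: (cvgry_ge f_cvgy).
- by near: n; apply: (cvgry_ge f_cvgy).
Unshelve. all: by end_near.
Qed.
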